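(* Let $a,b,p$ be integers with $a,b,p>1$ and $\gcd(a,b)=1$. Then the numerical semigroup $S=\langle a^p,\ a^p+b,\ a^p+ab,\ \dots,\ a^p+a^{p-1}b\rangle$ has $\alpha$-rectangular Apéry set and is not telescopic.
   Context: A numerical semigroup is a submonoid $S$ of $(\mathbb N,+)$ with finite complement in $\mathbb N$; $g_1<\dots<g_\nu$ is its minimal system of generators, $m=g_1$, and $\mathrm{Ap}(S)=\{s\in S: s-m\notin S\}$. For $i=2,\dots,\nu$: $\alpha_i=\max\{h\in\mathbb N: hg_i\in\mathrm{Ap}(S)\}$ and $\tau_i=\min\{h\in\mathbb N: hg_i\in\langle g_1,\dots,g_{i-1}\rangle\}-1$. $\mathrm{Ap}(S)$ is $\alpha$-rectangular if $\mathrm{Ap}(S)=\{\sum_{i=2}^\nu\lambda_ig_i: 0\le\lambda_i\le\alpha_i\}$; $S$ is telescopic if $\mathrm{Ap}(S)=\{\sum_{i=2}^\nu\lambda_ig_i: 0\le\lambda_i\le\tau_i\}$. *)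

From mathcomp Require Import all_boot.
Set Implicit Arguments. Unset Strict Implicit. Unset Printing Implicit Defensive.

Inductive mon (G : nat -> Prop) : nat -> Prop :=
| mon0 : mon G 0
| monS x y : G x -> mon G y -> mon G (x + y).

Definition monl (g : seq nat) : nat -> Prop := mon (fun x => x \in g).

(* A semigroup is represented by its membership predicate S : nat -> Prop.
   [g] is the minimal system of generators of S, listed increasingly:
   g generates S and no proper sub-list obtained by removing one element
   generates S. *)
Definition is_msg (S : nat -> Prop) (g : seq nat) : Prop :=
  sorted ltn g /\
  (forall x, S x <-> monl g x) /\
  (forall z, z \in g -> ~ (forall x, S x <-> monl (rem z g) x)).

(* Apéry set w.r.t. m : elements s of S such that the integer s - m is not in S. *)
Definition inAp (S : nat -> Prop) (m s : nat) : Prop :=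
  S s /\ ~ (m <= s /\ S (s - m)).

(* generator g_i (1-based indexing in the paper: g_(k+1) = nth 0 g k) *)
Definition gen (g : seq nat) (k : nat) : nat := nth 0 g k.

Definition is_alpha (S : nat -> Prop) (g : seq nat) (k h : nat) : Prop :=
  inAp S (gen g 0) (h * gen g k) /\
  (forall h', inAp S (gen g 0) (h' * gen g k) -> h' <= h).

Definition is_tau (g : seq nat) (k t : nat) : Prop :=
  monl (take k g) (t.+1 * gen g k) /\
  (forall h, 0 < h -> monl (take k g) (h * gen g k) -> t.+1 <= h).

Definition in_box (g : seq nat) (bound : nat -> nat) (s : nat) : Prop :=
  exists lam : nat -> nat,
    (forall k, 0 < k < size g -> lam k <= bound k) /\
    s = \sum_(1 <= k < size g) lam k * gen g k.

Definition alpha_rectangular (S : nat -> Prop) (g : seq nat) : Prop :=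
  exists alpha : nat -> nat,
    (forall k, 0 < k < size g -> is_alpha S g k (alpha k)) /\
    (forall s, inAp S (gen g 0) s <-> in_box g alpha s).

Definition telescopic (S : nat -> Prop) (g : seq nat) : Prop :=
  exists tau : nat -> nat,
    (forall k, 0 < k < size g -> is_tau g k (tau k)) /\
    (forall s, inAp S (gen g 0) s <-> in_box g tau s).

Definition gens_abp (a b p : nat) : seq nat :=
  a ^ p :: [seq a ^ p + a ^ i * b | i <- iota 0 p].

(* Write m = a^p and g_(i+2) = a^p + a^i b (0 <= i < p).  Every element of S is
   c m + sum_i l_i g_(i+2) = (c + sum l) m + b * sum_i l_i a^i.
   - Minimal generators: each listed generator is an atom of S (for the g_(i+2)
     this uses gcd(a^p, b) = 1), and a sorted list of atoms is the unique
     minimal system of generators of the monoid it spans.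
   - Apéry set: the carry rule a g_(i+2) = (a-1) m + g_(i+3) (resp. (a+b) m for
     the last generator) shows that Ap(S, m) only contains combinations with
     all l_i < a; conversely such combinations are pairwise incongruent modulo m
     (uniqueness of base-a expansions, and gcd(m, b) = 1), hence lie in Ap(S, m).
     Thus Ap(S, m) is the box with alpha_i = a - 1.
   - Not telescopic: tau_2 + 1 is a multiple of m, so tau_2 >= a and
     tau_2 g_2 is not in Ap(S, m). *)

From mathcomp Require Import all_boot zify.
From Stdlib Require Import Classical.
Set Implicit Arguments. Unset Strict Implicit. Unset Printing Implicit Defensive.

Lemma monD G x y : mon G x -> mon G y -> mon G (x + y).
Proof. by elim=> [//|u v Gu _ IH] Gy; rewrite -addnA; apply: monS => //; apply: IH. Qed.

Lemma monM G k x : G x -> mon G (k * x).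
Proof. by move=> Gx; elim: k => [|k IH]; [apply: mon0 | rewrite mulSn; apply: monS]. Qed.

Lemma monG (G : nat -> Prop) x : G x -> mon G x.
Proof. by move=> Gx; rewrite -(addn0 x); apply: monS => //; apply: mon0. Qed.

Lemma mon_mono (G H : nat -> Prop) x : (forall y, G y -> H y) -> mon G x -> mon H x.
Proof. by move=> GH; elim=> [|u v Gu _ IH]; [apply: mon0 | apply: monS => //; apply: GH]. Qed.

Lemma monl1_dvd d x : monl [:: d] x -> d %| x.
Proof. by elim=> [|u v /[!inE] /eqP -> _ IH]; [apply: dvdn0 | rewrite dvdn_addr]. Qed.

(* An atom of S is a nonzero element that is not the sum of two nonzero
   elements of S; atoms are exactly the elements every generating set needs. *)
Definition atom (S : nat -> Prop) (x : nat) : Prop :=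
  0 < x /\ forall u v, S u -> S v -> x = u + v -> u = 0 \/ v = 0.

Lemma atom_mem (S : nat -> Prop) g x :
  (forall y, S y <-> monl g y) -> atom S x -> S x -> x \in g.
Proof.
move=> Sg [x_gt0 irr] /Sg gx; elim: gx x_gt0 irr => [//|u v gu gv IH] uv_gt0 irr.
have Su : S u by apply/Sg/monG.
have [u0 | v0] := irr u v Su (proj2 (Sg v) gv) erefl; last by rewrite v0 addn0.
by move: uv_gt0 irr; rewrite u0 !add0n; apply: IH.
Qed.

Lemma msg_of_atoms g0 : sorted ltn g0 -> (forall x, x \in g0 -> atom (monl g0) x) ->
  is_msg (monl g0) g0 /\ (forall g, is_msg (monl g0) g -> g = g0).
Proof.
move=> sorted_g0 atoms.
have uniq_g0 : uniq g0 := sorted_uniq ltn_trans ltnn sorted_g0.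
split.
  split=> //; split=> // z zg0 gen_rem.
  have z_rem : z \in rem z g0 by apply: (atom_mem gen_rem); [apply: atoms | apply/monG].
  by rewrite mem_rem_uniqF in z_rem.
move=> g [sorted_g [gen_g min_g]].
have g0_sub_g : {subset g0 <= g}.
  by move=> x xg0; apply: (atom_mem gen_g); [apply: atoms | apply/monG].
apply: (irr_sorted_eq ltn_trans ltnn) => // z; apply/idP/idP; last exact: g0_sub_g.
move=> zg; apply/negPn/negP => zNg0; apply: (min_g z zg) => x; split.
- apply: mon_mono => y yg0; rewrite mem_rem_uniq ?(sorted_uniq ltn_trans ltnn) //.
  by rewrite !inE g0_sub_g // andbT; apply: contraNneq zNg0 => <-.
- by move=> Rx; apply/gen_g; apply: mon_mono Rx => y /mem_rem.
Qed.

Lemma apery_decomp (S : nat -> Prop) m x : 0 < m -> S x ->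
  exists k w, inAp S m w /\ x = k * m + w.
Proof.
move=> m_gt0; elim/ltn_ind: x => x IH Sx.
have [[m_le_x Sxm] | x_ap] := classic (m <= x /\ S (x - m)); last by exists 0, x.
have [k [w [w_ap exm]]] := IH (x - m) ltac:(lia) Sxm.
by exists k.+1, w; split=> //; rewrite mulSn; lia.
Qed.

Definition digval (a n : nat) (mu : nat -> nat) : nat := \sum_(j < n) mu j * a ^ j.
Definition digits_lt (a n : nat) (mu : nat -> nat) : Prop := forall j, j < n -> mu j < a.

Lemma digval_recl a n mu :
  digval a n.+1 mu = mu 0 + a * digval a n (fun j => mu j.+1).
Proof.
rewrite /digval big_ord_recl expn0 muln1 big_distrr; congr (_ + _).
by apply: eq_bigr => j _; rewrite expnS mulnCA.
Qed.

Lemma digval_lt a n mu : digits_lt a n mu -> digval a n mu < a ^ n.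
Proof.
elim: n mu => [|n IH] mu mu_lt; first by rewrite /digval big_ord0.
rewrite digval_recl expnS.
have := IH _ (fun j jn => mu_lt j.+1 jn); have := mu_lt 0 isT; nia.
Qed.

Lemma digval_inj a n mu nu : 0 < a -> digits_lt a n mu -> digits_lt a n nu ->
  digval a n mu = digval a n nu -> forall j, j < n -> mu j = nu j.
Proof.
move=> a_gt0; elim: n mu nu => [//|n IH] mu nu mu_lt nu_lt.
rewrite !digval_recl => e.
have e0 : mu 0 = nu 0.
  have mu0 := mu_lt 0 isT; have nu0 := nu_lt 0 isT.
  by have := congr1 (modn^~ a) e; rewrite ![_ + a * _]addnC ![a * _]mulnC !modnMDl !modn_small.
move: e; rewrite e0 => /addnI /eqP; rewrite eqn_pmul2l // => /eqP e.
case=> [//|j] jn; apply: (IH (fun i => mu i.+1) (fun i => nu i.+1)) e j jn.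
  by move=> i i_lt; apply: mu_lt; rewrite ltnS.
by move=> i i_lt; apply: nu_lt; rewrite ltnS.
Qed.

Lemma eqn_mod_coprime_mull d c x y :
  coprime d c -> (c * x == c * y %[mod d]) = (x == y %[mod d]).
Proof.
move=> cop_dc; wlog le_yx : x y / y <= x.
  by move=> H; case: (leqP y x) => [/H // | /ltnW /H]; rewrite eq_sym [(x %% d) == _]eq_sym.
by rewrite !eqn_mod_dvd ?leq_mul2l ?le_yx ?orbT // -mulnBr Gauss_dvdr.
Qed.

Section AbpSemigroup.

Variables a b p : nat.

Local Notation m := (a ^ p).
Local Notation gens := (gens_abp a b p).
Local Notation S := (monl (gens_abp a b p)).

Definition gi (i : nat) : nat := a ^ p + a ^ i * b.

Definition lin (l : nat -> nat) : nat := \sum_(j < p) l j * gi j.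

Lemma gensE : gens = m :: map gi (iota 0 p).
Proof. by []. Qed.

Lemma size_gens : size gens = p.+1.
Proof. by rewrite gensE /= size_map size_iota. Qed.

Lemma gen_gensS i : i < p -> gen gens i.+1 = gi i.
Proof. by move=> ip; rewrite /gen gensE /= (nth_map 0) ?size_iota // nth_iota. Qed.

Lemma mem_gi i : i < p -> gi i \in gens.
Proof. by move=> ip; rewrite gensE inE map_f ?orbT // mem_iota. Qed.

Lemma lin_single c i : i < p -> lin (fun j => c * (j == i)) = c * gi i.
Proof.
move=> ip; rewrite /lin (bigD1 (Ordinal ip)) //= eqxx muln1 big1 ?addn0 // => j.
by rewrite -val_eqE /= => /negbTE ->; rewrite muln0.
Qed.

Lemma linD l l' : lin (fun j => l j + l' j) = lin l + lin l'.
Proof. by rewrite /lin -big_split; apply: eq_bigr => j _; rewrite mulnDl. Qed.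

Lemma lin_split_at l i : i < p ->
  lin l = lin (fun j => if j == i then 0 else l j) + l i * gi i.
Proof.
move=> ip; rewrite /lin (bigD1 (Ordinal ip)) //= [X in _ = X + _](bigD1 (Ordinal ip)) //=.
rewrite eqxx mul0n add0n addnC.
by congr (_ + _); apply: eq_bigr => j; rewrite -val_eqE /= => /negbTE ->.
Qed.

(* A combination is (sum of coefficients) * a^p plus b times the base-a number
   with digits l; modulo a^p only the second part survives. *)
Lemma lin_expand l : lin l = (\sum_(j < p) l j) * m + b * digval a p l.
Proof.
rewrite /lin /digval big_distrl big_distrr -big_split /=.
by apply: eq_bigr => j _; rewrite /gi; lia.
Qed.

Lemma S_comb c l : S (c * m + lin l).
Proof.
apply: monD; first by apply/monM; rewrite inE eqxx.
apply: (big_ind (fun x => S x)) => [|x y|j _]; [exact: mon0 | exact: monD |].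
by apply/monM/mem_gi.
Qed.

Lemma S_rep x : S x -> exists c l, x = c * m + lin l.
Proof.
elim=> [|u v + _ [c [l ->]]]; first by exists 0, (fun _ => 0); rewrite /lin big1.
rewrite gensE inE => /orP [/eqP -> | /mapP [i]]; first by exists c.+1, l; rewrite mulSn addnA.
rewrite mem_iota add0n => ip ->; exists c, (fun j => l j + 1 * (j == i)).
by rewrite linD lin_single // mul1n; lia.
Qed.

Lemma S_pos_rep x : S x -> 0 < x -> exists C M, 0 < C /\ x = C * m + b * M.
Proof.
move=> /S_rep [c [l ->]]; rewrite lin_expand => x_gt0.
exists (c + \sum_(j < p) l j), (digval a p l); split; last by lia.
rewrite lt0n; apply: contraTneq x_gt0 => /eqP; rewrite addn_eq0 => /andP [/eqP c0 sum0].
have digval0 : digval a p l = 0.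
  by move: sum0; rewrite sum_nat_eq0 => /forallP l0; apply: big1 => j _; rewrite (eqP (l0 j)).
by rewrite c0 (eqP sum0) digval0 !mul0n muln0.
Qed.

Lemma sum_box (lam : nat -> nat) :
  \sum_(1 <= k < size gens) lam k * gen gens k = lin (fun i => lam i.+1).
Proof. by rewrite size_gens big_add1 -pred_Sn big_mkord; apply: eq_bigr => i _; rewrite gen_gensS. Qed.

Lemma in_box_gensP bound s : in_box gens bound s <->
  exists l, (forall i, i < p -> l i <= bound i.+1) /\ s = lin l.
Proof.
split.
  move=> [lam [lam_le ->]]; exists (fun i => lam i.+1); split; last exact: sum_box.
  by move=> i ip; apply: lam_le; rewrite size_gens ltnS.
move=> [l [l_le ->]]; exists (fun k => l k.-1); split; last by rewrite sum_box.
move=> k /andP [k_gt0]; rewrite size_gens ltnS => kp.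
by have := l_le k.-1; rewrite prednK //; apply; lia.
Qed.

Hypothesis a_gt1 : 1 < a.

Lemma m_gt0 : 0 < m.
Proof. by rewrite expn_gt0 ltnW. Qed.

Lemma sorted_gens : 0 < b -> 0 < p -> sorted ltn gens.
Proof.
move=> b_gt0 p_gt0; rewrite gensE.
have gi_mono : {homo gi : i j / i < j} by move=> i j ij; rewrite /gi ltn_add2l ltn_pmul2r ?ltn_exp2l.
have := homo_sorted gi_mono _ (iota_ltn_sorted 0 p).
have -> : iota 0 p = 0 :: iota 1 p.-1 by rewrite -{1}(prednK p_gt0).
by move=> /= ->; rewrite andbT /gi expn0 mul1n; lia.
Qed.

(* Carry rule: a g_(i+2) = (a - 1) a^p + g_(i+3), and for the last generator
   a g_(p+1) = (a + b) a^p; in both cases a * gi i - a^p lies in S. *)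
Lemma carry_gi i : i < p -> m <= a * gi i /\ S (a * gi i - m).
Proof.
move=> ip; split; first by rewrite /gi; nia.
case: (ltnP i.+1 p) => [ip1 | ip1].
  have -> : a * gi i - m = (a - 2) * m + lin (fun j => 1 * (j == i.+1)).
    by rewrite lin_single // /gi expnS; nia.
  exact: S_comb.
have -> : a * gi i - m = (a + b - 1) * m by rewrite /gi (_ : p = i.+1) ?expnS; nia.
by apply/monM; rewrite inE eqxx.
Qed.

Lemma large_multiple_shift i h : i < p -> a <= h ->
  m <= h * gi i /\ S (h * gi i - m).
Proof.
move=> ip a_le_h; have [m_le S_carry] := carry_gi ip.
have split_h : h * gi i = (h - a) * gi i + a * gi i by rewrite -mulnDl subnK.
split; first by rewrite split_h (leq_trans m_le) ?leq_addl.
have -> : h * gi i - m = (h - a) * gi i + (a * gi i - m) by rewrite split_h addnBA.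
by apply: monD => //; apply/monM/mem_gi.
Qed.

Lemma ap_digits w c l : inAp S m w -> w = c * m + lin l -> c = 0 /\ digits_lt a p l.
Proof.
move=> [Sw w_ap] ew; split.
  case: c ew => // c ew; exfalso; apply: w_ap; split; first by rewrite ew mulSn; lia.
  have -> : w - m = c * m + lin l by rewrite ew mulSn; lia.
  exact: S_comb.
move=> i ip; rewrite ltnNge; apply/negP => a_le_li; apply: w_ap.
have [m_le S_shift] := large_multiple_shift ip a_le_li.
move: ew; rewrite (lin_split_at l ip) => ew.
split; first by rewrite ew; lia.
have -> : w - m = (c * m + lin (fun j => if j == i then 0 else l j)) + (l i * gi i - m).
  by rewrite ew; lia.
exact: monD (S_comb _ _) S_shift.
Qed.

Hypothesis coprime_ab : coprime a b.

Lemma coprime_mb : coprime m b.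
Proof. exact: coprimeXl. Qed.

Lemma atom_gens x : x \in gens -> atom S x.
Proof.
move=> xg; have m0 := m_gt0; split.
  by move: xg; rewrite gensE inE => /orP [/eqP -> | /mapP [i _ ->]] //; rewrite /gi ltn_addr.
move=> u v Su Sv e; case: (posnP u) => [|u_gt0]; [by left | right].
case: (posnP v) => [// | v_gt0]; exfalso.
have [Cu [Mu [Cu_gt0 Eu]]] := S_pos_rep Su u_gt0.
have [Cv [Mv [Cv_gt0 Ev]]] := S_pos_rep Sv v_gt0.
move: xg e; rewrite Eu Ev gensE inE => /orP [/eqP -> | /mapP [i]]; first by nia.
rewrite mem_iota /= => ip -> {x}; rewrite /gi => e.
have ai_lt : a ^ i < m by rewrite ltn_exp2l.
have M_lt : Mu + Mv < a ^ i by nia.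
have ediff : b * (a ^ i - (Mu + Mv)) = (Cu + Cv - 1) * m by rewrite mulnBr; nia.
have : m %| a ^ i - (Mu + Mv) by rewrite -(Gauss_dvdr _ coprime_mb) ediff dvdn_mull.
by move/dvdn_leq; lia.
Qed.

Lemma lin_digits_mod_inj mu nu : digits_lt a p mu -> digits_lt a p nu ->
  lin mu = lin nu %[mod m] -> lin mu = lin nu.
Proof.
move=> mu_lt nu_lt e; suff eq_mn : forall j, j < p -> mu j = nu j.
  by apply: eq_bigr => j _; rewrite eq_mn.
apply: (digval_inj (ltnW a_gt1)) => //; apply/eqP.
rewrite -(modn_small (digval_lt mu_lt)) -(modn_small (digval_lt nu_lt)).
by rewrite -(eqn_mod_coprime_mull _ _ coprime_mb); move: e; rewrite !lin_expand !modnMDl => ->.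
Qed.

Lemma ap_lin s : inAp S m s <-> exists mu, digits_lt a p mu /\ s = lin mu.
Proof.
split.
  move=> s_ap; have [c [l E]] := S_rep (proj1 s_ap).
  by have [c0 l_lt] := ap_digits s_ap E; exists l; rewrite E c0.
move=> [mu [mu_lt ->]].
have S_mu : S (lin mu) by have := S_comb 0 mu; rewrite mul0n.
have [k [w [w_ap E]]] := apery_decomp m_gt0 S_mu.
have [c [l El]] := S_rep (proj1 w_ap); have [c0 l_lt] := ap_digits w_ap El.
rewrite c0 mul0n add0n in El.
suff -> : lin mu = w by [].
by rewrite El; apply: lin_digits_mod_inj => //; rewrite E El modnMDl.
Qed.

Lemma ap_multiple i h : i < p -> inAp S m (h * gi i) <-> h < a.
Proof.
move=> ip; split.
  move=> [_ h_ap]; rewrite ltnNge; apply/negP => a_le_h.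
  by apply: h_ap; apply: large_multiple_shift.
move=> h_lt; apply/ap_lin; exists (fun j => h * (j == i)); split; last by rewrite lin_single.
by move=> j _; case: (j == i); rewrite ?muln1 ?muln0 //; lia.
Qed.

Lemma alpha_rectangular_gens : alpha_rectangular S gens.
Proof.
exists (fun _ => a - 1); split.
  move=> k /andP [k_gt0]; rewrite size_gens ltnS => kp.
  have ip : k.-1 < p by lia.
  rewrite -(prednK k_gt0) /is_alpha gen_gensS //.
  by split; [apply/ap_multiple; lia | move=> h /ap_multiple; lia].
move=> s; rewrite ap_lin in_box_gensP.
by split=> -[l [l_lt ->]]; exists l; split=> // i /l_lt; lia.
Qed.

(* tau_2 + 1 is a multiple of a^p, so tau_2 >= a and tau_2 g_2 falls outside
   the Apéry set, which a telescopic box would contain. *)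
Lemma not_telescopic_gens : 1 < p -> ~ telescopic S gens.
Proof.
move=> p_gt1 [tau [tau_ok box]].
have p_gt0 : 0 < p by lia.
have [tau_mult _] := tau_ok 1 ltac:(rewrite size_gens; lia).
have m_le_tau : m <= (tau 1).+1.
  have : monl [:: m] ((tau 1).+1 * gi 0) by move: tau_mult; rewrite gen_gensS // gensE /= take0.
  move/monl1_dvd.
  rewrite /gi expn0 mul1n mulnDr (dvdn_addr _ (dvdn_mull _ (dvdnn m))) Gauss_dvdl ?coprime_mb //.
  by move/dvdn_leq; apply.
have tau_ap : inAp S m (tau 1 * gi 0).
  apply/box/in_box_gensP; exists (fun i => tau 1 * (i == 0)); split; last by rewrite lin_single.
  by move=> [|i] _; rewrite ?muln1 ?muln0.
have a_lt_m : a < m by rewrite -{1}(expn1 a) ltn_exp2l.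
by move: tau_ap; rewrite ap_multiple //; lia.
Qed.

End AbpSemigroup.

Theorem mainTheorem12 (a b p : nat) :
  1 < a -> 1 < b -> 1 < p -> coprime a b ->
  (exists g, is_msg (monl (gens_abp a b p)) g) /\
  (forall g, is_msg (monl (gens_abp a b p)) g ->
     alpha_rectangular (monl (gens_abp a b p)) g /\
     ~ telescopic (monl (gens_abp a b p)) g).
Proof.
move=> a_gt1 b_gt1 p_gt1 coprime_ab.
have [gens_msg msg_unique] := msg_of_atoms
  (sorted_gens a_gt1 (ltnW b_gt1) (ltnW p_gt1)) (atom_gens a_gt1 coprime_ab).
split; first by exists (gens_abp a b p).
move=> g /msg_unique ->; split; first exact: alpha_rectangular_gens.
exact: not_telescopic_gens.
Qed.
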